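(* Let $L$ be a split regular Hom-Lie color algebra with symmetric root system $\Lambda$. For every $\alpha\in\Lambda$, the graded subspace $L_{\Lambda_\alpha}=H_{\Lambda_\alpha}\oplus V_{\Lambda_\alpha}$ is a subalgebra of $L$, i.e. $[L_{\Lambda_\alpha},L_{\Lambda_\alpha}]\subset L_{\Lambda_\alpha}$ and $\phi(L_{\Lambda_\alpha})=L_{\Lambda_\alpha}$.
   Context: Let $\mathbb{K}$ be a field and $\Gamma$ an abelian group. A bi-character is $\varepsilon:\Gamma\times\Gamma\to\mathbb{K}\setminus\{0\}$ with $\varepsilon(a,b)\varepsilon(b,a)=1$, $\varepsilon(a,b+c)=\varepsilon(a,b)\varepsilon(a,c)$, $\varepsilon(a+b,c)=\varepsilon(a,c)\varepsilon(b,c)$. A Hom-Lie color algebra $(L,[\cdot,\cdot],\phi,\varepsilon)$ is a $\Gamma$-graded space $L=\bigoplus_gL_g$ with bilinear $[\cdot,\cdot]$, $[L_g,L_h]\subset L_{g+h}$, linear $\phi$ with $\phi(L_g)\subset L_g$, $\phi([x,y])=[\phi x,\phi y]$, such that for homogeneous $x,y,z$ of degrees $\bar x,\bar y,\bar z$: $[x,y]=-\varepsilon(\bar x,\bar y)[y,x]$ and $\varepsilon(\bar z,\bar x)[\phi(x),[y,z]]+\varepsilon(\bar x,\bar y)[\phi(y),[z,x]]+\varepsilon(\bar y,\bar z)[\phi(z),[x,y]]=0$; regular means $\phi$ bijective. A subalgebra is a graded subspace $A$ with $[A,A]\subset A$, $\phi(A)=A$; abelian if $[A,A]=0$. $H=\bigoplus_gH_g$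 is a maximal abelian graded subalgebra (so $\phi(H_0)=H_0$). For linear $\alpha:H_0\to\mathbb{K}$, $L_\alpha=\{v:[h,v]=\alpha(h)\phi(v)\ \forall h\in H_0\}$; $\Lambda=\{\alpha\in H_0^*\setminus\{0\}:L_\alpha\neq0\}$; $L$ is split if $L=H\oplus(\bigoplus_{\alpha\in\Lambda}L_\alpha)$. $\Lambda$ is symmetric if $\alpha\in\Lambda\Rightarrow-\alpha\in\Lambda$. For $z\in\mathbb{Z}$, $\alpha\phi^{z}:=\alpha\circ(\phi|_{H_0})^{z}$; $\mathbb{N}=\{0,1,2,\dots\}$. Connection: for $\alpha,\beta\in\Lambda$, $\alpha$ is connected to $\beta$ if there exist $k\ge1$ and $\alpha_1,\dots,\alpha_k\in\Lambda$ such that: if $k=1$, $\alpha_1\in\{\alpha\phi^{-n}:n\in\mathbb{N}\}\cap\{\pm\beta\phi^{-m}:m\in\mathbb{N}\}$; if $k\ge2$, then $\alpha_1\in\{\alpha\phi^{-n}:n\in\mathbb{N}\}$, for each $i=1,\dots,k-2$ one has $\alpha_1\phi^{-i}+\alpha_2\phi^{-i}+\alpha_3\phi^{-i+1}+\cdots+\alpha_{i+1}\phi^{-1}\in\Lambda$, and $\alpha_1\phi^{-k+1}+\alpha_2\phi^{-k+1}+\alpha_3\phi^{-k+2}+\cdots+\alpha_k\phi^{-1}\in\{\pm\beta\phi^{-m}:m\in\mathbb{N}\}$. Connectedness $\sim$ is an equivalence relation on $\Lambda$; $\Lambda_\alpha:=\{\beta\in\Lambda:\beta\sim\alpha\}$.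 Define $H_{\Lambda_\alpha}:=\mathrm{span}_{\mathbb{K}}\{[L_\beta,L_{-\beta}]:\beta\in\Lambda_\alpha\}\subset H$, $V_{\Lambda_\alpha}:=\bigoplus_{\beta\in\Lambda_\alpha}L_\beta$, and $L_{\Lambda_\alpha}:=H_{\Lambda_\alpha}\oplus V_{\Lambda_\alpha}$. *)

From HB Require Import structures.
From mathcomp Require Import all_boot all_order all_algebra.
From Stdlib Require Import ClassicalEpsilon.
Set Implicit Arguments. Unset Strict Implicit. Unset Printing Implicit Defensive.
Import GRing.Theory.
Local Open Scope ring_scope.

(* Subspaces of a (possibly infinite-dimensional) K-vector space V are
   represented as predicates V -> Prop. *)
Definition is_subspace (K : fieldType) (V : lmodType K) (P : V -> Prop) : Prop :=
  P 0 /\ forall (a : K) (x y : V), P x -> P y -> P (a *: x + y).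

Inductive span (K : fieldType) (V : lmodType K) (P : V -> Prop) : V -> Prop :=
| span0 : span P 0
| spanS : forall (a : K) (x y : V), P x -> span P y -> span P (a *: x + y).

Definition bicharacter (K : fieldType) (G : zmodType) (eps : G -> G -> K) : Prop :=
  (forall a b, eps a b != 0) /\
  (forall a b, eps a b * eps b a = 1) /\
  (forall a b c, eps a (b + c) = eps a b * eps a c) /\
  (forall a b c, eps (a + b) c = eps a c * eps b c).

Definition grading (K : fieldType) (G : zmodType) (V : lmodType K)
    (Lg : G -> V -> Prop) : Prop :=
  (forall g, is_subspace (Lg g)) /\
  (forall v : V, exists s : seq (G * V),
      uniq (map fst s) /\ (forall p, p \in s -> Lg p.1 p.2) /\
      v = \sum_(p <- s) p.2) /\
  (forall s : seq (G * V),
      uniq (map fst s) -> (forall p, p \in s -> Lg p.1 p.2) ->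
      \sum_(p <- s) p.2 = 0 -> forall p, p \in s -> p.2 = 0).

Definition HomLieColor (K : fieldType) (G : zmodType) (V : lmodType K)
    (br : V -> V -> V) (phi : V -> V) (eps : G -> G -> K)
    (Lg : G -> V -> Prop) : Prop :=
  bicharacter eps /\ grading Lg /\
  (forall (a : K) x y z, br (a *: x + y) z = a *: br x z + br y z) /\
  (forall (a : K) x y z, br x (a *: y + z) = a *: br x y + br x z) /\
  (forall (a : K) x y, phi (a *: x + y) = a *: phi x + phi y) /\
  (forall g h x y, Lg g x -> Lg h y -> Lg (g + h) (br x y)) /\
  (forall g x, Lg g x -> Lg g (phi x)) /\
  (forall x y, phi (br x y) = br (phi x) (phi y)) /\
  (forall g h x y, Lg g x -> Lg h y -> br x y = - (eps g h *: br y x)) /\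
  (forall a b c x y z, Lg a x -> Lg b y -> Lg c z ->
      eps c a *: br (phi x) (br y z) + eps a b *: br (phi y) (br z x)
      + eps b c *: br (phi z) (br x y) = 0).

Definition regular (V : Type) (phi : V -> V) : Prop := bijective phi.

Definition graded_subspace (K : fieldType) (G : zmodType) (V : lmodType K)
    (Lg : G -> V -> Prop) (A : V -> Prop) : Prop :=
  is_subspace A /\
  forall a, A a -> exists s : seq (G * V),
      uniq (map fst s) /\ (forall p, p \in s -> Lg p.1 p.2 /\ A p.2) /\
      a = \sum_(p <- s) p.2.

Definition subalgebra (K : fieldType) (G : zmodType) (V : lmodType K)
    (br : V -> V -> V) (phi : V -> V) (Lg : G -> V -> Prop) (A : V -> Prop) : Prop :=
  graded_subspace Lg A /\
  (forall x y, A x -> A y -> A (br x y)) /\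
  (forall x, A x -> A (phi x)) /\ (forall y, A y -> exists x, A x /\ phi x = y).

Definition abelian_subalgebra (K : fieldType) (G : zmodType) (V : lmodType K)
    (br : V -> V -> V) (phi : V -> V) (Lg : G -> V -> Prop) (A : V -> Prop) : Prop :=
  subalgebra br phi Lg A /\ (forall x y, A x -> A y -> br x y = 0).

Definition max_abelian_subalgebra (K : fieldType) (G : zmodType) (V : lmodType K)
    (br : V -> V -> V) (phi : V -> V) (Lg : G -> V -> Prop) (H : V -> Prop) : Prop :=
  abelian_subalgebra br phi Lg H /\
  forall A, abelian_subalgebra br phi Lg A -> (forall x, H x -> A x) ->
    forall x, A x -> H x.

Definition H0 (K : fieldType) (G : zmodType) (V : lmodType K)
    (Lg : G -> V -> Prop) (H : V -> Prop) : V -> Prop :=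
  fun x => H x /\ Lg 0 x.

(* Elements of H_0^* are represented by functions V -> K; only their
   restriction to H_0 matters.  Equality in H_0^*: *)
Definition feq_on (K : fieldType) (V : lmodType K) (P : V -> Prop) (a b : V -> K) : Prop :=
  forall h, P h -> a h = b h.

Definition linear_on (K : fieldType) (V : lmodType K) (P : V -> Prop) (a : V -> K) : Prop :=
  forall (c : K) x y, P x -> P y -> a (c *: x + y) = c * a x + a y.

Definition root_space (K : fieldType) (G : zmodType) (V : lmodType K)
    (br : V -> V -> V) (phi : V -> V) (Lg : G -> V -> Prop) (H : V -> Prop)
    (alpha : V -> K) : V -> Prop :=
  fun v => forall h, H0 Lg H h -> br h v = alpha h *: phi v.

Definition is_root (K : fieldType) (G : zmodType) (V : lmodType K)
    (br : V -> V -> V) (phi : V -> V) (Lg : G -> V -> Prop) (H : V -> Prop)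
    (alpha : V -> K) : Prop :=
  linear_on (H0 Lg H) alpha /\ ~ feq_on (H0 Lg H) alpha (fun _ => 0) /\
  exists v, v != 0 /\ root_space br phi Lg H alpha v.

Definition split_wrt (K : fieldType) (G : zmodType) (V : lmodType K)
    (br : V -> V -> V) (phi : V -> V) (Lg : G -> V -> Prop) (H : V -> Prop) : Prop :=
  (forall x : V, exists (h : V) (s : seq ((V -> K) * V)),
      H h /\ (forall p, List.In p s -> is_root br phi Lg H p.1 /\
                                      root_space br phi Lg H p.1 p.2) /\
      x = h + \sum_(p <- s) p.2) /\
  (forall (h : V) (s : seq ((V -> K) * V)),
      H h -> (forall p, List.In p s -> is_root br phi Lg H p.1 /\
                                     root_space br phi Lg H p.1 p.2) ->
      (forall i j, (i < size s)%N -> (j < size s)%N -> i <> j ->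
         ~ feq_on (H0 Lg H) (nth (fun _ => 0, 0) s i).1 (nth (fun _ => 0, 0) s j).1) ->
      h + \sum_(p <- s) p.2 = 0 ->
      h = 0 /\ forall p, List.In p s -> p.2 = 0).

Definition symmetric_roots (K : fieldType) (G : zmodType) (V : lmodType K)
    (br : V -> V -> V) (phi : V -> V) (Lg : G -> V -> Prop) (H : V -> Prop) : Prop :=
  forall alpha, is_root br phi Lg H alpha -> is_root br phi Lg H (fun h => - alpha h).

(* The inverse of phi (phi is bijective; phi^{-1} is chosen classically,
   and is the two-sided inverse whenever phi is bijective). *)
Definition finv (K : fieldType) (V : lmodType K) (phi : V -> V) : V -> V :=
  fun y => epsilon (inhabits (0 : V)) (fun x => phi x = y).

Definition comp_phi_inv (K : fieldType) (V : lmodType K) (phi : V -> V)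
    (alpha : V -> K) (n : nat) : V -> K :=
  fun h => alpha (iter n (finv phi) h).

(* For a sequence s = [alpha_1; ...; alpha_k] and i >= 0:
   S s i = alpha_1 phi^{-i} + alpha_2 phi^{-i} + alpha_3 phi^{-i+1} + ... + alpha_{i+1} phi^{-1}
   (so S s 0 = alpha_1). *)
Definition conn_sum (K : fieldType) (V : lmodType K) (phi : V -> V)
    (s : seq (V -> K)) (i : nat) : V -> K :=
  fun h => comp_phi_inv phi (nth (fun _ => 0) s 0) i h
         + \sum_(2 <= j < i.+2) comp_phi_inv phi (nth (fun _ => 0) s j.-1) (i.+2 - j) h.

(* With k = size s >= 1 and s = [alpha_1;...;alpha_k]:
   alpha_1 = alpha phi^{-n} for some n; S s i ∈ Λ for 1 <= i <= k-2;
   S s (k-1) ∈ {± beta phi^{-m}}.  For k = 1 this is exactly the paper's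
   condition alpha_1 ∈ {alpha phi^{-n}} ∩ {± beta phi^{-m}} since S s 0 = alpha_1. *)
Definition connected (K : fieldType) (G : zmodType) (V : lmodType K)
    (br : V -> V -> V) (phi : V -> V) (Lg : G -> V -> Prop) (H : V -> Prop)
    (alpha beta : V -> K) : Prop :=
  is_root br phi Lg H alpha /\ is_root br phi Lg H beta /\
  exists s : seq (V -> K),
    (0 < size s)%N /\
    (forall a, List.In a s -> is_root br phi Lg H a) /\
    (exists n : nat, feq_on (H0 Lg H) (nth (fun _ => 0) s 0) (comp_phi_inv phi alpha n)) /\
    (forall i : nat, (1 <= i)%N -> (i <= size s - 2)%N ->
        is_root br phi Lg H (conn_sum phi s i)) /\
    (exists m : nat,
        feq_on (H0 Lg H) (conn_sum phi s (size s - 1)) (comp_phi_inv phi beta m) \/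
        feq_on (H0 Lg H) (conn_sum phi s (size s - 1))
               (fun h => - comp_phi_inv phi beta m h)).

Definition Lambda_class (K : fieldType) (G : zmodType) (V : lmodType K)
    (br : V -> V -> V) (phi : V -> V) (Lg : G -> V -> Prop) (H : V -> Prop)
    (alpha : V -> K) (beta : V -> K) : Prop :=
  is_root br phi Lg H beta /\ connected br phi Lg H beta alpha.

Definition H_Lambda (K : fieldType) (G : zmodType) (V : lmodType K)
    (br : V -> V -> V) (phi : V -> V) (Lg : G -> V -> Prop) (H : V -> Prop)
    (alpha : V -> K) : V -> Prop :=
  span (fun x => exists (beta : V -> K) (y z : V),
     Lambda_class br phi Lg H alpha beta /\ root_space br phi Lg H beta y /\
     root_space br phi Lg H (fun h => - beta h) z /\ x = br y z).

Definition V_Lambda (K : fieldType) (G : zmodType) (V : lmodType K)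
    (br : V -> V -> V) (phi : V -> V) (Lg : G -> V -> Prop) (H : V -> Prop)
    (alpha : V -> K) : V -> Prop :=
  span (fun v => exists beta : V -> K,
     Lambda_class br phi Lg H alpha beta /\ root_space br phi Lg H beta v).

Definition L_Lambda (K : fieldType) (G : zmodType) (V : lmodType K)
    (br : V -> V -> V) (phi : V -> V) (Lg : G -> V -> Prop) (H : V -> Prop)
    (alpha : V -> K) : V -> Prop :=
  fun x => exists h v, H_Lambda br phi Lg H alpha h /\
                       V_Lambda br phi Lg H alpha v /\ x = h + v.

(* The Jacobi identity with an element of [H_0] in the first slot shows that
   [[L_b, L_c]] lies in [L_d] for [d = (b + c) phi^-1], while [phi] maps [L_b] into
   [L_(b phi^-1)] and [phi^-1] maps it into [L_(b phi)].  The splitting forces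
   [L_0 = H], so [H_Lambda] lies in the abelian algebra [H], which maps each [L_b]
   into [L_(b phi^-1)].  For [b, c] in [Lambda_alpha], the bracket [[L_b, L_c]] is
   thus in [H_Lambda] when [d = 0], vanishes when [d] is not a root, and otherwise
   lies in [V_Lambda]: prepending [d] and [-c phi^-1] to a connection from [b]
   gives a connection from [d], thanks to the symmetry of [Lambda].  Finally,
   [Lambda_alpha] is stable under [b |-> b phi^-1] and [b |-> b phi], whence
   [phi(L_Lambda) = L_Lambda]. *)

From Pilot Require Import Defs.
From HB Require Import structures.
From mathcomp Require Import all_boot all_order all_algebra.
From mathcomp Require Import zify ring.
From Stdlib Require Import ClassicalEpsilon Classical.
Set Implicit Arguments. Unset Strict Implicit. Unset Printing Implicit Defensive.
Import GRing.Theory.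
Local Open Scope ring_scope.

Lemma In_nth (T : Type) (x0 : T) (s : seq T) k : (k < size s)%N -> List.In (nth x0 s k) s.
Proof. by elim: s k => [|a s IH] [|k] //= hk; [left | right; apply: IH]. Qed.

Lemma In_set_nth (T : Type) (x0 y : T) (s : seq T) k q : (k < size s)%N ->
  List.In q (set_nth x0 s k y) -> q = y \/ List.In q s.
Proof.
elim: s k => [|a s IH] [|k] //= hk; first by case=> [<-|hq]; [left | right; right].
case=> [<-|hq]; first by right; left.
by case: (IH k hk hq) => [->|]; [left | right; right].
Qed.

Lemma sum_set_nth (T : Type) (R : zmodType) (F : T -> R) (x0 y : T) (s : seq T) k :
  (k < size s)%N ->
  \sum_(x <- set_nth x0 s k y) F x = \sum_(x <- s) F x - F (nth x0 s k) + F y.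
Proof.
elim: s k => [|a s IH] [|k] //= hk; rewrite !big_cons; last by rewrite IH // !addrA.
by rewrite [F a + _]addrC addrK addrC.
Qed.

Lemma eq_bigIn (I : Type) (R : zmodType) (s : seq I) (F1 F2 : I -> R) :
  (forall i, List.In i s -> F1 i = F2 i) -> \sum_(i <- s) F1 i = \sum_(i <- s) F2 i.
Proof.
elim: s => [|a s IH] hF; rewrite ?big_nil // !big_cons hF; last by left.
by rewrite IH // => i hi; apply: hF; right.
Qed.

Section LinearMaps.
Variables (K : fieldType) (U W : lmodType K) (f : U -> W).
Hypothesis hf : linear f.

Let F : {linear U -> W} := HB.pack f (GRing.isLinear.Build K U W _ f hf).

Lemma lin0 : f 0 = 0. Proof. exact: (raddf0 F). Qed.
Lemma linD x y : f (x + y) = f x + f y. Proof. exact: (raddfD F). Qed.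
Lemma linN x : f (- x) = - f x. Proof. exact: (raddfN F). Qed.
Lemma linB x y : f (x - y) = f x - f y. Proof. exact: (raddfB F). Qed.
Lemma linZ a x : f (a *: x) = a *: f x. Proof. exact: (linearZZ F). Qed.
Lemma lin_sum (I : Type) (s : seq I) (E : I -> U) :
  f (\sum_(i <- s) E i) = \sum_(i <- s) f (E i).
Proof. exact: (raddf_sum F). Qed.

End LinearMaps.

Section Subspaces.
Variables (K : fieldType) (V : lmodType K).
Implicit Types (P Q : V -> Prop) (x y : V).

Lemma subspace0 P : is_subspace P -> P 0.
Proof. by case. Qed.

Lemma subspaceZD P a x y : is_subspace P -> P x -> P y -> P (a *: x + y).
Proof. by case=> _; apply. Qed.

Lemma subspaceD P x y : is_subspace P -> P x -> P y -> P (x + y).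
Proof. by move=> hP hx hy; have := subspaceZD 1 hP hx hy; rewrite scale1r. Qed.

Lemma subspaceZ P a x : is_subspace P -> P x -> P (a *: x).
Proof. by move=> hP hx; have := subspaceZD a hP hx (subspace0 hP); rewrite addr0. Qed.

Lemma subspaceB P x y : is_subspace P -> P x -> P y -> P (x - y).
Proof. by move=> hP hx hy; rewrite -scaleN1r addrC; apply: subspaceZD. Qed.

Lemma subspace_sum P (I : eqType) (s : seq I) (F : I -> V) :
  is_subspace P -> (forall i, i \in s -> P (F i)) -> P (\sum_(i <- s) F i).
Proof.
move=> hP; elim: s => [|i s IH] hF; first by rewrite big_nil; apply: subspace0.
rewrite big_cons; apply: subspaceD => //; first by apply: hF; rewrite mem_head.
by apply: IH => j hj; apply: hF; rewrite inE hj orbT.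
Qed.

Lemma subspace_preim (U : lmodType K) (f : U -> V) Q :
  linear f -> is_subspace Q -> is_subspace (fun u => Q (f u)).
Proof.
move=> hf hQ; split=> [|a x y]; first by rewrite lin0 //; apply: subspace0.
by rewrite hf; apply: subspaceZD.
Qed.

Lemma span_subspace P : is_subspace (Defs.span P).
Proof.
split=> [|a x y hx]; first exact: Defs.span0.
elim: hx y => [|b u x' hu _ IH] y hy; first by rewrite scaler0 add0r.
by rewrite scalerDr scalerA -addrA; apply: Defs.spanS => //; apply: IH.
Qed.

Lemma span_base P x : P x -> Defs.span P x.
Proof. by move=> hx; have := Defs.spanS 1 hx (Defs.span0 P); rewrite scale1r addr0. Qed.

Lemma span_min P Q : is_subspace Q -> (forall x, P x -> Q x) ->
  forall x, Defs.span P x -> Q x.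
Proof.
move=> hQ hPQ x; elim=> [|a u y hu _ IH]; first exact: subspace0.
by apply: subspaceZD => //; apply: hPQ.
Qed.

End Subspaces.

Section FunctionalsOn.
Variables (K : fieldType) (V : lmodType K) (P : V -> Prop).
Implicit Types a b c : V -> K.

Lemma feq_on_refl a : feq_on P a a.
Proof. by []. Qed.

Lemma feq_on_sym a b : feq_on P a b -> feq_on P b a.
Proof. by move=> e h hh; rewrite e. Qed.

Lemma feq_on_trans a b c : feq_on P a b -> feq_on P b c -> feq_on P a c.
Proof. by move=> e1 e2 h hh; rewrite e1 ?e2. Qed.

Lemma feq_onW a b : a =1 b -> feq_on P a b.
Proof. by move=> e h _. Qed.

End FunctionalsOn.

Lemma bicharacter0r (K : fieldType) (G : zmodType) (eps : G -> G -> K) b :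
  bicharacter eps -> eps b 0 = 1.
Proof.
case=> hn [_ [hr _]]; have := hr b 0 0; rewrite addr0 -{1}(mulr1 (eps b 0)).
by move/(mulfI (hn b 0)).
Qed.

Lemma bicharacter0l (K : fieldType) (G : zmodType) (eps : G -> G -> K) b :
  bicharacter eps -> eps 0 b = 1.
Proof.
case=> hn [_ [_ hl]]; have := hl 0 0 b; rewrite addr0 -{1}(mulr1 (eps 0 b)).
by move/(mulfI (hn 0 b)).
Qed.

Section Grading.
Variables (K : fieldType) (G : zmodType) (V : lmodType K) (Lg : G -> V -> Prop).
Hypothesis hLg : grading Lg.

Lemma grading_subspace g : is_subspace (Lg g).
Proof. by case: hLg. Qed.

Lemma grading_decomp v : exists s : seq (G * V),
  uniq (map fst s) /\ (forall p, p \in s -> Lg p.1 p.2) /\ v = \sum_(p <- s) p.2.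
Proof. by case: hLg => _ []. Qed.

Lemma grading_sum_eq0 (s : seq (G * V)) :
  uniq (map fst s) -> (forall p, p \in s -> Lg p.1 p.2) ->
  \sum_(p <- s) p.2 = 0 -> forall p, p \in s -> p.2 = 0.
Proof. by case: hLg => _ [_]; apply. Qed.

(* Subtract [y] from the degree-[g] component, or add it as a new one. *)
Lemma grading_component_eq0 g y (s : seq (G * V)) :
  uniq (map fst s) -> (forall p, p \in s -> Lg p.1 p.2) -> Lg g y ->
  \sum_(p <- s) p.2 = y -> forall p, p \in s -> p.1 != g -> p.2 = 0.
Proof.
move=> hu hs hy hsum p hp hpg.
case: (boolP (g \in map fst s)) => hgs.
- pose t := map (fun q : G * V => (q.1, q.2 - (if q.1 == g then y else 0))) s.
  have -> : p.2 = (p.1, p.2 - (if p.1 == g then y else 0)).2.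
    by rewrite /= (negbTE hpg) subr0.
  apply: (@grading_sum_eq0 t); last by apply: map_f.
  + by rewrite -map_comp.
  + move=> _ /mapP [q hq ->] /=; apply: subspaceB; [exact: grading_subspace|exact: hs|].
    by case: eqP => [->|_]; [exact: hy | exact: subspace0 (grading_subspace _)].
  + rewrite big_map sumrB hsum -big_mkcond /= big_const_seq.
    by rewrite -(count_map fst (pred1 g)) count_uniq_mem // hgs /= addr0 subrr.
- apply: (@grading_sum_eq0 ((g, - y) :: s)); last by rewrite inE hp orbT.
  + by rewrite /= hgs.
  + move=> q; rewrite inE => /orP [/eqP -> /=|]; last exact: hs.
    by rewrite -scaleN1r; apply: subspaceZ (grading_subspace g) hy.
  + by rewrite big_cons hsum addNr.
Qed.

Lemma grading_reflect (f : V -> V) g x : linear f -> injective f ->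
  (forall h v, Lg h v -> Lg h (f v)) -> Lg g (f x) -> Lg g x.
Proof.
move=> hf finj fLg hfx.
have [s [hu [hs ex]]] := grading_decomp x.
rewrite ex in hfx *.
apply: subspace_sum (grading_subspace g) _ => p hp.
have [<-|hpg] := eqVneq p.1 g; first exact: hs.
suff -> : p.2 = 0 by apply: subspace0; apply: grading_subspace.
apply: finj; rewrite lin0 //.
have := @grading_component_eq0 g (f (\sum_(q <- s) q.2))
  (map (fun q : G * V => (q.1, f q.2)) s) _ _ hfx _ (p.1, f p.2); apply => //.
- by rewrite -map_comp.
- by move=> _ /mapP [q hq ->] /=; apply: fLg; apply: hs.
- by rewrite big_map lin_sum.
- exact: (map_f (fun q : G * V => (q.1, f q.2))).
Qed.

End Grading.

Section SplitRegularHomLieColor.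
Variables (K : fieldType) (G : zmodType) (V : lmodType K)
  (br : V -> V -> V) (phi : V -> V) (eps : G -> G -> K)
  (Lg : G -> V -> Prop) (H : V -> Prop).
Hypothesis hL : HomLieColor br phi eps Lg.
Hypothesis hreg : regular phi.
Hypothesis hH : max_abelian_subalgebra br phi Lg H.
Hypothesis hsplit : split_wrt br phi Lg H.
Hypothesis hsym : symmetric_roots br phi Lg H.

Local Notation fi := (Defs.finv phi).
Local Notation H_0 := (H0 Lg H).
Local Notation Lr := (root_space br phi Lg H).
Local Notation isroot := (is_root br phi Lg H).
Local Notation cpi := (comp_phi_inv phi).

Lemma bicharacter_eps : bicharacter eps. Proof. by case: hL. Qed.
Lemma grading_Lg : grading Lg. Proof. by case: hL => _ []. Qed.
Lemma br_linearl z : linear (br^~ z).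
Proof. by move=> a x y; case: hL => _ [_ [hl _]]. Qed.
Lemma br_linearr z : linear (br z).
Proof. by move=> a x y; case: hL => _ [_ [_ [hr _]]]. Qed.
Lemma phi_linear : linear phi.
Proof. by move=> a x y; case: hL => _ [_ [_ [_ [hphi _]]]]. Qed.
Lemma br_graded g h x y : Lg g x -> Lg h y -> Lg (g + h) (br x y).
Proof. by case: hL => _ [_ [_ [_ [_ [hb _]]]]]; apply: hb. Qed.
Lemma phi_graded g x : Lg g x -> Lg g (phi x).
Proof. by case: hL => _ [_ [_ [_ [_ [_ [hp _]]]]]]; apply: hp. Qed.
Lemma phi_br x y : phi (br x y) = br (phi x) (phi y).
Proof. by case: hL => _ [_ [_ [_ [_ [_ [_ [hp _]]]]]]]. Qed.
Lemma br_skew g h x y : Lg g x -> Lg h y -> br x y = - (eps g h *: br y x).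
Proof. by case: hL => _ [_ [_ [_ [_ [_ [_ [_ [hs _]]]]]]]]; apply: hs. Qed.
Lemma br_jacobi a b c x y z : Lg a x -> Lg b y -> Lg c z ->
  eps c a *: br (phi x) (br y z) + eps a b *: br (phi y) (br z x)
  + eps b c *: br (phi z) (br x y) = 0.
Proof. by case: hL => _ [_ [_ [_ [_ [_ [_ [_ [_ hj]]]]]]]]; apply: hj. Qed.

Lemma phi_inj : injective phi.
Proof. by case: hreg => g h1 _; apply: can_inj h1. Qed.

Lemma finvK : cancel fi phi.
Proof.
move=> y; case: hreg => g _ h2.
by apply: (epsilon_spec (inhabits 0) (fun x => phi x = y)); exists (g y).
Qed.

Lemma phiK : cancel phi fi.
Proof. by move=> x; apply: phi_inj; rewrite finvK. Qed.

Lemma finv_linear : linear fi.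
Proof. by move=> a x y; apply: phi_inj; rewrite phi_linear !finvK. Qed.

Lemma finv_br x y : fi (br x y) = br (fi x) (fi y).
Proof. by apply: phi_inj; rewrite phi_br !finvK. Qed.

Lemma H_subspace : is_subspace H. Proof. by case: hH => [[[[]]]]. Qed.
Lemma H_br x y : H x -> H y -> br x y = 0.
Proof. by case: hH => [[_ hab]] _; apply: hab. Qed.
Lemma H_phi x : H x -> H (phi x).
Proof. by case: hH => [[[_ [_ [hp _]]]]] _ _; apply: hp. Qed.
Lemma H_finv y : H y -> H (fi y).
Proof. by case: hH => [[[_ [_ [_ hs]]]]] _ _ /hs [x [hx <-]]; rewrite phiK. Qed.

Lemma H0_subspace : is_subspace H_0.
Proof.
split=> [|a x y [hx1 hx2] [hy1 hy2]].
  by split; apply: subspace0; [exact: H_subspace | exact: grading_subspace grading_Lg 0].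
by split; apply: subspaceZD => //; [exact: H_subspace | exact: grading_subspace grading_Lg 0].
Qed.

Lemma H0_phi h : H_0 h -> H_0 (phi h).
Proof. by case=> h1 h2; split; [apply: H_phi | apply: phi_graded]. Qed.

Lemma H0_finv h : H_0 h -> H_0 (fi h).
Proof.
case=> h1 h2; split; first exact: H_finv.
apply: (grading_reflect grading_Lg phi_linear phi_inj phi_graded).
by rewrite finvK.
Qed.

Lemma root_space_feq f g v : feq_on H_0 f g -> Lr f v -> Lr g v.
Proof. by move=> e hv h hh; rewrite -e // hv. Qed.

Lemma root_space_subspace f : is_subspace (Lr f).
Proof.
split=> [h _|a x y hx hy h hh]; first by rewrite (lin0 (br_linearr h)) (lin0 phi_linear) scaler0.
by rewrite br_linearr hx // hy // phi_linear scalerDr !scalerA mulrC.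
Qed.

Lemma root_space_graded f v : Lr f v -> exists s : seq (G * V),
  uniq (map fst s) /\ (forall p, p \in s -> Lg p.1 p.2 /\ Lr f p.2) /\
  v = \sum_(p <- s) p.2.
Proof.
move=> hv; have [s [hu [hs ev]]] := grading_decomp grading_Lg v.
exists s; split=> //; split=> // p hp; split; first exact: hs.
move=> h hh; apply/eqP; rewrite -subr_eq0; apply/eqP.
pose t := map (fun q : G * V => (q.1, br h q.2 - f h *: phi q.2)) s.
apply: (@grading_sum_eq0 _ _ _ _ grading_Lg t _ _ _ (p.1, br h p.2 - f h *: phi p.2)).
- by rewrite -map_comp.
- move=> _ /mapP [q hq ->] /=; apply: subspaceB; first exact: grading_subspace grading_Lg _.
    by rewrite -[q.1]add0r; apply: br_graded; [case: hh | apply: hs].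
  by apply: subspaceZ; [exact: grading_subspace grading_Lg _ | apply: phi_graded; apply: hs].
- rewrite big_map sumrB -(lin_sum (br_linearr h)) -ev -scaler_sumr -(lin_sum phi_linear) -ev.
  by rewrite hv // subrr.
- exact: (map_f (fun q : G * V => (q.1, br h q.2 - f h *: phi q.2))).
Qed.

(* The Jacobi identity with [phi^-1 h] in the first slot, [h] in [H_0]. *)
Lemma root_space_br_homogeneous b c f g x y : Lg b x -> Lg c y -> Lr f x -> Lr g y ->
  Lr (fun h => f (fi h) + g (fi h)) (br x y).
Proof.
move=> hbx hcy hx hy h hh; have hh' := H0_finv hh; set h' := fi h in hh'.
have [_ [eps_inv _]] := bicharacter_eps.
have eps0r d : eps d 0 = 1 by exact: bicharacter0r bicharacter_eps.
have eps0l d : eps 0 d = 1 by exact: bicharacter0l bicharacter_eps.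
have := br_jacobi (proj2 hh') hbx hcy.
rewrite eps0r eps0l !scale1r (br_skew hcy (proj2 hh')) eps0r scale1r.
rewrite (hy h' hh') (hx h' hh') (linN (br_linearr _)) !(linZ (br_linearr _)).
rewrite (br_skew (phi_graded hcy) (phi_graded hbx)) /h' finvK.
rewrite !scalerN !scalerA mulrAC eps_inv mul1r -addrA -opprD -scalerDl.
by move/eqP; rewrite subr_eq0 phi_br addrC => /eqP.
Qed.

Lemma root_space_br f g x y : Lr f x -> Lr g y ->
  Lr (fun h => f (fi h) + g (fi h)) (br x y).
Proof.
move=> /root_space_graded [s [_ [hs ->]]] /root_space_graded [t [_ [ht ->]]].
rewrite (lin_sum (br_linearl _)); apply: subspace_sum (root_space_subspace _) _ => p hp.
rewrite (lin_sum (br_linearr _)); apply: subspace_sum (root_space_subspace _) _ => q hq.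
have [hp1 hp2] := hs p hp; have [hq1 hq2] := ht q hq.
exact: root_space_br_homogeneous hp1 hq1 hp2 hq2.
Qed.

Lemma root_space_phi f v : Lr f v -> Lr (fun h => f (fi h)) (phi v).
Proof.
move=> hv h hh; rewrite -{1}(finvK h) -phi_br hv; last exact: H0_finv.
by rewrite (linZ phi_linear).
Qed.

Lemma root_space_finv f v : Lr f v -> Lr (fun h => f (phi h)) (fi v).
Proof.
move=> hv h hh; apply: phi_inj.
by rewrite phi_br finvK hv ?(linZ phi_linear) ?finvK //; apply: H0_phi.
Qed.

Lemma H_root_space0 x : H x -> Lr (fun _ => 0) x.
Proof. by move=> hx h [hh _]; rewrite H_br // scale0r. Qed.

Lemma is_root_feq a b : isroot a -> feq_on H_0 a b -> isroot b.
Proof.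
move=> [hl [hn [v [hv0 hv]]]] e; split; [|split].
- by move=> c x y hx hy; rewrite -!e //; [exact: hl | exact: subspaceZD H0_subspace hx hy].
- by move=> hb; apply: hn => h hh; rewrite e //; exact: hb.
- by exists v; split=> //; apply: root_space_feq hv.
Qed.

Lemma is_root_finv f : isroot f -> isroot (fun h => f (fi h)).
Proof.
move=> [hl [hn [v [hv0 hv]]]]; split; [|split].
- by move=> c x y hx hy /=; rewrite finv_linear hl //; exact: H0_finv.
- move=> hf; apply: hn => h hh; rewrite -(phiK h); apply: hf.
  exact: H0_phi.
- exists (phi v); split; last exact: root_space_phi.
  by apply: contraNneq hv0 => e; apply/eqP/phi_inj; rewrite e (lin0 phi_linear).
Qed.

Lemma is_root_phi f : isroot f -> isroot (fun h => f (phi h)).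
Proof.
move=> [hl [hn [v [hv0 hv]]]]; split; [|split].
- by move=> c x y hx hy /=; rewrite phi_linear hl //; exact: H0_phi.
- move=> hf; apply: hn => h hh; rewrite -(finvK h); apply: hf.
  exact: H0_finv.
- exists (fi v); split; last exact: root_space_finv.
  by apply: contraNneq hv0 => e; rewrite -(finvK v) e (lin0 phi_linear).
Qed.

Lemma is_root_cpi f n : isroot f -> isroot (cpi f n).
Proof.
move=> hf; elim: n => [|n IH]; first exact: is_root_feq hf (feq_onW (fun _ => erefl)).
by apply: is_root_feq (is_root_finv IH) (feq_onW _) => h; rewrite /comp_phi_inv iterSr.
Qed.

Definition root_vector (p : (V -> K) * V) : Prop := isroot p.1 /\ Lr p.1 p.2.

Definition distinct_roots (s : seq ((V -> K) * V)) : Prop :=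
  forall i j, (i < size s)%N -> (j < size s)%N -> i <> j ->
  ~ feq_on H_0 (nth (fun _ => 0, 0) s i).1 (nth (fun _ => 0, 0) s j).1.

(* Root vectors with equal roots on [H_0] are merged into one. *)
Lemma distinct_roots_sum (s : seq ((V -> K) * V)) :
  (forall p, List.In p s -> root_vector p) ->
  exists s', [/\ forall p, List.In p s' -> root_vector p, distinct_roots s' &
    \sum_(p <- s) p.2 = \sum_(p <- s') p.2].
Proof.
elim: s => [|p s IH] hs; first by exists [::]; split.
have [s' [hs' hd' es]] := IH (fun q hq => hs q (or_intror hq)).
have [hp1 hp2] := hs p (or_introl erefl).
set d0 := (fun _ => 0, 0) : (V -> K) * V.
case: (classic (exists2 k, (k < size s')%N & feq_on H_0 (nth d0 s' k).1 p.1)).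
- case=> k hk hkp; set q := nth d0 s' k.
  have [hq1 hq2] := hs' q (In_nth d0 hk).
  exists (set_nth d0 s' k (q.1, q.2 + p.2)); split.
  + move=> r /(In_set_nth hk) [->|]; last exact: hs'.
    split=> //=; apply: subspaceD hq2 _; first exact: root_space_subspace.
    by apply: root_space_feq hp2; apply: feq_on_sym.
  + move=> i j; rewrite size_set_nth (maxn_idPr hk) !nth_set_nth /=.
    by case: eqP => [->|_]; case: eqP => [->|_]; apply: hd'.
  + by rewrite sum_set_nth // big_cons es /= -/q addrA subrK addrC.
- move=> hn; exists (p :: s'); split; last by rewrite !big_cons es.
  + by move=> r [<-|hr]; [split | apply: hs'].
  + move=> [|i] [|j] //= hi hj hij.
    * by move=> hf; apply: hn; exists j => //; exact: feq_on_sym.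
    * by move=> hf; apply: hn; exists i.
    * by apply: hd' => // e; apply: hij; rewrite e.
Qed.

(* For [x] in [L_0] written as [h + sum v_i] with distinct roots [beta_i], each
   [h'] in [H_0] gives [sum beta_i(h') phi(v_i) = [h', x - h] = 0]; uniqueness
   of the root decomposition then kills every [v_i], choosing [beta_i(h') <> 0]. *)
Lemma root_space0_H x : Lr (fun _ => 0) x -> H x.
Proof.
move=> hx; have [hdec huniq] := hsplit.
have [h [s [hh [hs ex]]]] := hdec x.
have [s' [hs' hd' es]] := distinct_roots_sum hs.
have weighted_sum0 h' : H_0 h' -> \sum_(p <- s') p.1 h' *: p.2 = 0.
  move=> hh'; apply: phi_inj; rewrite (lin0 phi_linear) (lin_sum phi_linear).
  transitivity (\sum_(p <- s') br h' p.2).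
    by apply: eq_bigIn => p hp; rewrite (linZ phi_linear) (proj2 (hs' p hp) _ hh').
  have -> : \sum_(p <- s') br h' p.2 = br h' (x - h).
    by rewrite ex addrC addKr es (lin_sum (br_linearr h')).
  by rewrite (linB (br_linearr h')) hx // scale0r (H_br (proj1 hh') hh) subrr.
have vector0 p : List.In p s' -> p.2 = 0.
  move=> hp; have [[_ [hn _]] _] := hs' p hp.
  have [h' hh' hne] : exists2 h', H_0 h' & p.1 h' <> 0.
    apply: NNPP => hno; apply: hn => h' hh'.
    by apply: NNPP => hne; apply: hno; exists h'.
  pose t := map (fun q : (V -> K) * V => (q.1, q.1 h' *: q.2)) s'.
  have t_roots q : List.In q t -> root_vector q.
    case/List.in_map_iff => r [<- hr]; have [hr1 hr2] := hs' r hr.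
    by split=> //; apply: subspaceZ hr2; exact: root_space_subspace.
  have t_distinct : distinct_roots t.
    move=> i j; rewrite size_map => hi hj.
    by rewrite !(nth_map (fun _ => 0, 0)) //; exact: hd'.
  have t_sum : 0 + \sum_(q <- t) q.2 = 0.
    by rewrite add0r big_map; exact: weighted_sum0.
  have [_ t0] := huniq 0 t (subspace0 H_subspace) t_roots t_distinct t_sum.
  have /eqP := t0 _ (List.in_map _ _ _ hp).
  by rewrite /= scaler_eq0 => /orP [/eqP|/eqP].
by rewrite ex es (eq_bigIn vector0) big1 // addr0.
Qed.

Lemma comp_phi_invS f n h : cpi f n.+1 h = cpi f n (fi h).
Proof. by rewrite /comp_phi_inv iterSr. Qed.

Lemma comp_phi_invD f a b h : cpi (cpi f a) b h = cpi f (a + b) h.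
Proof. by rewrite /comp_phi_inv iterD. Qed.

Lemma comp_phi_inv_feq f g n : feq_on H_0 f g -> feq_on H_0 (cpi f n) (cpi g n).
Proof.
move=> e h hh; apply: e.
by elim: n => //= n IH; apply: H0_finv.
Qed.

(* [conn_walk a t i] is the paper's [alpha_1 phi^-i + alpha_2 phi^-i + ... + alpha_(i+1) phi^-1]
   for the sequence [a :: t], computed through [S_(i+1) = (S_i + alpha_(i+2)) phi^-1]. *)
Fixpoint conn_walk (a : V -> K) (t : seq (V -> K)) (i : nat) : V -> K :=
  if i is i'.+1 then fun h => conn_walk a t i' (fi h) + nth (fun _ => 0) t i' (fi h)
  else a.

Lemma conn_sum_walk a t i h : conn_sum phi (a :: t) i h = conn_walk a t i h.
Proof.
elim: i h => [|i IH] h; first by rewrite /conn_sum big_geq // addr0.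
rewrite /= -IH /conn_sum big_nat_recr //= subSnn comp_phi_invS addrA.
congr (_ + _ + _); apply: eq_big_nat => j /andP [_ hj].
by rewrite subSn ?comp_phi_invS // ltnW.
Qed.

Lemma conn_walk_feq a a' t i :
  feq_on H_0 a a' -> feq_on H_0 (conn_walk a t i) (conn_walk a' t i).
Proof. by move=> e; elim: i => [|i IH] //= h hh; rewrite IH //; apply: H0_finv. Qed.

Lemma conn_walk_cpi a t i k h :
  conn_walk (cpi a k) (map (cpi^~ k) t) i h = cpi (conn_walk a t i) k h.
Proof.
elim: i h => [|i IH] h //=; rewrite IH /comp_phi_inv -iterSr iterS; congr (_ + _).
case: (ltnP i (size t)) => hi; last by rewrite !nth_default ?size_map.
by rewrite (nth_map (fun _ => 0)) // /comp_phi_inv -iterSr iterS.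
Qed.

Lemma conn_walk_catl a t u i h :
  (i <= size t)%N -> conn_walk a (t ++ u) i h = conn_walk a t i h.
Proof. by elim: i h => [|i IH] h //= hi; rewrite IH ?(ltnW hi) // nth_cat hi. Qed.

Lemma conn_walk_cat a t u j h :
  conn_walk a (t ++ u) (size t + j) h = conn_walk (conn_walk a t (size t)) u j h.
Proof.
elim: j h => [|j IH] h; first by rewrite addn0 conn_walk_catl.
by rewrite addnS /= IH nth_cat ltnNge leq_addr /= addKn.
Qed.

(* [connected] without the memberships of [b] and [a] in [Lambda], the chain
   being split into its head [a0] and tail [t]. *)
Definition root_walk (b a : V -> K) : Prop :=
  exists (a0 : V -> K) (t : seq (V -> K)) (n m : nat),
  [/\ isroot a0, forall x, List.In x t -> isroot x, feq_on H_0 a0 (cpi b n),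
      forall i, (0 < i < size t)%N -> isroot (conn_walk a0 t i) &
      feq_on H_0 (conn_walk a0 t (size t)) (cpi a m) \/
      feq_on H_0 (conn_walk a0 t (size t)) (fun h => - cpi a m h)].

Lemma connected_walk b a :
  connected br phi Lg H b a <-> [/\ isroot b, isroot a & root_walk b a].
Proof.
have ewalk a0 t i : feq_on H_0 (conn_sum phi (a0 :: t) i) (conn_walk a0 t i).
  by apply: feq_onW => h; exact: conn_sum_walk.
split.
- case=> hb [ha [[|a0 t] [//= _ [hr [[n hn] [hmid [m hm]]]]]]].
  split=> //; exists a0, t, n, m; split.
  + by apply: hr; left.
  + by move=> x hx; apply: hr; right.
  + exact: hn.
  + move=> i /andP [hi1 hi2]; apply: is_root_feq (ewalk a0 t i).
    by apply: hmid => //=; lia.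
  + rewrite /= subn1 /= in hm.
    by case: hm => hm; [left | right]; exact: feq_on_trans (feq_on_sym (ewalk a0 t _)) hm.
- case=> hb ha [a0 [t [n [m [h0 ht hn hmid hm]]]]].
  split=> //; split=> //; exists (a0 :: t); split=> //; split; [|split; [|split]].
  + by move=> x [<-|hx]; [|apply: ht].
  + by exists n.
  + move=> i hi1 hi2; apply: is_root_feq (feq_on_sym (ewalk a0 t i)).
    by apply: hmid; move: hi2 => /=; lia.
  + exists m; rewrite /= subn1 /=.
    by case: hm => hm; [left | right]; exact: feq_on_trans (ewalk a0 t _) hm.
Qed.

Lemma root_walk_cpi b a k : root_walk b a -> root_walk (cpi b k) a.
Proof.
case=> a0 [t [n [m [h0 ht hn hmid hm]]]].
have ewalk : feq_on H_0 (conn_walk (cpi a0 k) (map (cpi^~ k) t) (size t))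
                        (cpi (conn_walk a0 t (size t)) k).
  by apply: feq_onW => h; rewrite conn_walk_cpi.
exists (cpi a0 k), (map (cpi^~ k) t), n, (m + k); split.
- exact: is_root_cpi.
- by move=> x /List.in_map_iff [y [<- hy]]; apply: is_root_cpi; apply: ht.
- apply: feq_on_trans (comp_phi_inv_feq k hn) _.
  by apply: feq_onW => h; rewrite !comp_phi_invD addnC.
- move=> i; rewrite size_map => hi.
  apply: is_root_feq (is_root_cpi k (hmid i hi)) _.
  by apply: feq_onW => h; rewrite conn_walk_cpi.
- rewrite size_map; case: hm => hm; [left | right];
    apply: feq_on_trans ewalk (feq_on_trans (comp_phi_inv_feq k hm) (feq_onW _)) => h.
  + by rewrite comp_phi_invD.
  + by rewrite /comp_phi_inv iterD.
Qed.

Lemma root_walk_phi b a : root_walk b a -> root_walk (fun h => b (phi h)) a.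
Proof.
case=> a0 [t [n [m [h0 ht hn hmid hm]]]].
exists a0, t, n.+1, m; split=> //.
apply: feq_on_trans hn (feq_onW _) => h.
by rewrite /comp_phi_inv iterS finvK.
Qed.

(* Prepend [(b + c) phi^-1 phi^-n] and [- c phi^-(n+1)] to the walk from [b]
   shifted by [phi^-2]: the second partial sum is then [b phi^-(n+2)]. *)
Lemma root_walk_add b c a : root_walk b a -> isroot c ->
  isroot (fun h => b (fi h) + c (fi h)) -> root_walk (fun h => b (fi h) + c (fi h)) a.
Proof.
case=> a0 [t [n [m [h0 ht hn hmid hm]]]] hc hd.
set d := fun h => b (fi h) + c (fi h).
set x := fun h => - cpi c n.+1 h.
set u := map (cpi^~ 2) t.
have ewalk j : feq_on H_0 (conn_walk (cpi d n) (x :: u) j.+1) (cpi (conn_walk a0 t j) 2).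
  apply: (@feq_on_trans _ _ _ _ (conn_walk (cpi a0 2) u j)); last first.
    by apply: feq_onW => h; rewrite conn_walk_cpi.
  apply: (@feq_on_trans _ _ _ _ (conn_walk (conn_walk (cpi d n) [:: x] 1) u j)).
    by apply: feq_onW => h; rewrite -(conn_walk_cat _ [:: x] u j h).
  apply: conn_walk_feq; apply: feq_on_trans (feq_on_sym (comp_phi_inv_feq 2 hn)).
  apply: feq_onW => h; rewrite comp_phi_invD addn2 /= /x /d /comp_phi_inv /=.
  by rewrite -!iterSr -iterS addrK.
exists (cpi d n), (x :: u), n, (m + 2); split.
- exact: is_root_cpi.
- move=> y [<-|]; first by apply: hsym; apply: is_root_cpi.
  by move=> /List.in_map_iff [z [<- hz]]; apply: is_root_cpi; apply: ht.
- exact: feq_on_refl.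
- case=> [//|j]; rewrite /= size_map ltnS => hj.
  apply: is_root_feq (feq_on_sym (ewalk j)).
  case: j hj => [|j] hj; first exact: is_root_cpi.
  by apply: is_root_cpi; apply: hmid.
- rewrite /= size_map; case: hm => hm; [left | right];
    apply: feq_on_trans (ewalk _) (feq_on_trans (comp_phi_inv_feq 2 hm) (feq_onW _)) => h.
  + by rewrite comp_phi_invD.
  + by rewrite /comp_phi_inv iterD.
Qed.

Variable alpha : V -> K.

Local Notation LC := (Lambda_class br phi Lg H alpha).
Local Notation HL := (H_Lambda br phi Lg H alpha).
Local Notation VL := (V_Lambda br phi Lg H alpha).
Local Notation LL := (L_Lambda br phi Lg H alpha).

Lemma Lambda_class_finv b : LC b -> LC (fun h => b (fi h)).
Proof.
case=> hb /connected_walk [_ ha hw]; split; first exact: is_root_finv.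
by apply/connected_walk; split=> //; [exact: is_root_finv | exact: root_walk_cpi 1 hw].
Qed.

Lemma Lambda_class_phi b : LC b -> LC (fun h => b (phi h)).
Proof.
case=> hb /connected_walk [_ ha hw]; split; first exact: is_root_phi.
by apply/connected_walk; split=> //; [exact: is_root_phi | exact: root_walk_phi].
Qed.

Lemma Lambda_class_add b c : LC b -> isroot c -> isroot (fun h => b (fi h) + c (fi h)) ->
  LC (fun h => b (fi h) + c (fi h)).
Proof.
case=> hb /connected_walk [_ ha hw] hc hd; split=> //.
by apply/connected_walk; split=> //; exact: root_walk_add.
Qed.

Lemma L_Lambda_subspace : is_subspace LL.
Proof.
split.
  by exists 0, 0; rewrite addr0; split; [exact: Defs.span0 | split; first exact: Defs.span0].
move=> a x y [h1 [v1 [hh1 [hv1 ->]]]] [h2 [v2 [hh2 [hv2 ->]]]].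
exists (a *: h1 + h2), (a *: v1 + v2); split; [|split].
- exact: subspaceZD (span_subspace _) hh1 hh2.
- exact: subspaceZD (span_subspace _) hv1 hv2.
- by rewrite scalerDr -!addrA; congr (_ + _); rewrite addrCA.
Qed.

Lemma H_Lambda_L x : HL x -> LL x.
Proof. by move=> hx; exists x, 0; rewrite addr0; split=> //; split; first exact: Defs.span0. Qed.

Lemma V_Lambda_L x : VL x -> LL x.
Proof. by move=> hx; exists 0, x; rewrite add0r; split; first exact: Defs.span0. Qed.

Lemma H_Lambda_H x : HL x -> H x.
Proof.
apply: span_min H_subspace _ x => _ [b [y [z [_ [hy [hz ->]]]]]].
apply: root_space0_H; apply: root_space_feq (root_space_br hy hz).
by apply: feq_onW => h; rewrite subrr.
Qed.

Lemma V_Lambda_brHl h v : H h -> VL v -> VL (br h v).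
Proof.
move=> hh; apply: span_min (subspace_preim (br_linearr h) (span_subspace _)) _ v.
move=> v [b [hb hv]]; apply: span_base; exists (fun h => b (fi h)); split.
  exact: Lambda_class_finv.
by apply: root_space_feq (root_space_br (H_root_space0 hh) hv) => h' _; rewrite add0r.
Qed.

Lemma V_Lambda_brHr h v : H h -> VL v -> VL (br v h).
Proof.
move=> hh; apply: span_min (subspace_preim (br_linearl h) (span_subspace _)) _ v.
move=> v [b [hb hv]]; apply: span_base; exists (fun h => b (fi h)); split.
  exact: Lambda_class_finv.
by apply: root_space_feq (root_space_br hv (H_root_space0 hh)) => h' _; rewrite addr0.
Qed.

(* The bracket lies in [L_d] for [d = (b + c) phi^-1]: if [d = 0] it is a generator
   of [H_Lambda], if [d] is a root then [d] is in [Lambda_alpha], and otherwise the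
   bracket vanishes, since a nonzero vector of [L_d] would make [d] a root. *)
Lemma L_Lambda_br_root_spaces b c y z : LC b -> LC c -> Lr b y -> Lr c z ->
  LL (br y z).
Proof.
move=> hb [hc _] hy hz; set d := fun h => b (fi h) + c (fi h).
have hd := root_space_br hy hz.
case: (classic (feq_on H_0 d (fun _ => 0))) => [hd0|hd_ne0].
  apply: H_Lambda_L; apply: span_base; exists b, y, z; split=> //; split=> //; split=> //.
  apply: root_space_feq hz => h hh; apply/eqP; rewrite -addr_eq0 addrC.
  by have := hd0 _ (H0_phi hh); rewrite /d !phiK => ->.
case: (classic (isroot d)) => [hdr|hdnr].
  by apply: V_Lambda_L; apply: span_base; exists d; split=> //; exact: Lambda_class_add.
case: (classic (br y z = 0)) => [->|hne]; first exact: subspace0 L_Lambda_subspace.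
case: hdnr; split; [|split; [exact: hd_ne0 | exists (br y z); split=> //; exact/eqP]].
have [[lb _] [lc _]] := (is_root_finv (proj1 hb), is_root_finv hc).
by move=> a x x' hx hx'; rewrite /d lb // lc //; ring.
Qed.

Lemma L_Lambda_brV v w : VL v -> VL w -> LL (br v w).
Proof.
move=> hv hw; apply: span_min (subspace_preim (br_linearl w) L_Lambda_subspace) _ v hv.
move=> y [b [hb hy]]; apply: span_min (subspace_preim (br_linearr y) L_Lambda_subspace) _ w hw.
by move=> z [c [hc hz]]; exact: L_Lambda_br_root_spaces hb hc hy hz.
Qed.

Lemma L_Lambda_br x y : LL x -> LL y -> LL (br x y).
Proof.
move=> [h1 [v1 [hh1 [hv1 ->]]]] [h2 [v2 [hh2 [hv2 ->]]]].
have [hH1 hH2] := (H_Lambda_H hh1, H_Lambda_H hh2).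
rewrite (linD (br_linearl _)) !(linD (br_linearr _)) (H_br hH1 hH2) add0r addrA.
apply: subspaceD L_Lambda_subspace _ (L_Lambda_brV hv1 hv2).
by apply: subspaceD L_Lambda_subspace _ _; apply: V_Lambda_L;
  [exact: V_Lambda_brHl | exact: V_Lambda_brHr].
Qed.

Lemma L_Lambda_stable (F psi : V -> V) : linear F -> {morph F : x y / br x y} ->
  (forall f v, Lr f v -> Lr (fun h => f (psi h)) (F v)) ->
  (forall b, LC b -> LC (fun h => b (psi h))) ->
  forall x, LL x -> LL (F x).
Proof.
move=> hF Fbr FLr FLC _ [h [v [hh [hv ->]]]].
exists (F h), (F v); split; [|split; last exact: linD].
- apply: span_min (subspace_preim hF (span_subspace _)) _ h hh.
  move=> _ [b [y [z [hb [hy [hz ->]]]]]]; apply: span_base.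
  exists (fun h => b (psi h)), (F y), (F z).
  by split; [exact: FLC | split; [exact: FLr | split; [exact: (FLr _ _ hz) | exact: Fbr]]].
- apply: span_min (subspace_preim hF (span_subspace _)) _ v hv.
  move=> u [b [hb hu]]; apply: span_base.
  by exists (fun h => b (psi h)); split; [exact: FLC | exact: FLr].
Qed.

Lemma L_Lambda_subalgebra :
  (forall x y, LL x -> LL y -> LL (br x y)) /\
  (forall x, LL x -> LL (phi x)) /\
  (forall y, LL y -> exists x, LL x /\ phi x = y).
Proof.
have LL_phi := L_Lambda_stable phi_linear phi_br root_space_phi Lambda_class_finv.
have LL_finv := L_Lambda_stable finv_linear finv_br root_space_finv Lambda_class_phi.
split; [exact: L_Lambda_br | split=> // y hy].
by exists (fi y); split; [exact: LL_finv | exact: finvK].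
Qed.

End SplitRegularHomLieColor.

Theorem mainTheorem7 (K : fieldType) (G : zmodType) (V : lmodType K)
    (br : V -> V -> V) (phi : V -> V) (eps : G -> G -> K)
    (Lg : G -> V -> Prop) (H : V -> Prop)
    (hL : HomLieColor br phi eps Lg)
    (hreg : regular phi)
    (hH : max_abelian_subalgebra br phi Lg H)
    (hsplit : split_wrt br phi Lg H)
    (hsym : symmetric_roots br phi Lg H)
    (alpha : V -> K) (halpha : is_root br phi Lg H alpha) :
  (forall x y, L_Lambda br phi Lg H alpha x -> L_Lambda br phi Lg H alpha y ->
     L_Lambda br phi Lg H alpha (br x y)) /\
  (forall x, L_Lambda br phi Lg H alpha x -> L_Lambda br phi Lg H alpha (phi x)) /\
  (forall y, L_Lambda br phi Lg H alpha y ->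
     exists x, L_Lambda br phi Lg H alpha x /\ phi x = y).
Proof. exact: (L_Lambda_subalgebra hL hreg hH hsplit hsym alpha). Qed.
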